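(* Let $a>0$, $b>0$, $c>0$ and put $\Phi(x)={}_1F_2\left(a\,;b,c\,;-\frac{x^2}{4}\right)$. Suppose $\Phi$ alternates in sign on $(0,\infty)$ and let $z_1$ denote its first zero on $(0,\infty)$. Then for any $\gamma\ge0$, $0\le\delta<b$, $0\le\epsilon<c$, the function $$\Psi(x)={}_1F_2\left(a+\gamma\,;b-\delta,\,c-\epsilon\,;-\frac{x^2}{4}\right)$$ also alternates in sign and possesses at least one zero on $(0,z_1]$.
   Context: For $a,b,c>0$, ${}_1F_2\left(a\,;b,c\,;-\frac{x^2}{4}\right)=\sum_{k=0}^\infty \frac{(a)_k}{k!\,(b)_k(c)_k}\left(-\frac{x^2}{4}\right)^k$, where $(\alpha)_k=\Gamma(\alpha+k)/\Gamma(\alpha)$. ''Alternates in sign'' means takes both positive and negative values on $(0,\infty)$. *)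

From Stdlib Require Import Reals.
From Coquelicot Require Import Coquelicot.
Open Scope R_scope.

Fixpoint poch (alpha : R) (k : nat) : R :=
  match k with
  | O => 1
  | S k' => poch alpha k' * (alpha + INR k')
  end.

Definition F12_term (a b c x : R) (k : nat) : R :=
  poch a k / (INR (Factorial.fact k) * poch b k * poch c k) * (- x ^ 2 / 4) ^ k.

(* 1F2(a; b, c; -x^2/4) as the sum of its (everywhere convergent) series. *)
Definition F12 (a b c x : R) : R := Series (F12_term a b c x).

Definition alternates_in_sign (f : R -> R) : Prop :=
  (exists x, 0 < x /\ 0 < f x) /\ (exists y, 0 < y /\ f y < 0).

From Stdlib Require Import Reals Lra Lia Psatz Classical.
From Coquelicot Require Import Coquelicot.
Open Scope R_scope.

(* The ratio [(al)_k / (al + be)_k] is the k-th moment of the Beta(al, be) law on [0, 1].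
   Multiplying the coefficients of an entire series [q] by these moments therefore averages
   [t |-> sum_k q_k (t u)^k] over [t] in [0, 1], so a lower bound of that function on [0, 1]
   survives the transform.  The coefficients of 1F2(a; b, c) are those of
   1F2(a + gamma; b - delta, c - epsilon) multiplied by three such moment sequences; hence a
   lower bound of Psi on [0, X] is also one for Phi at X.  If Psi had no zero on (0, z1], its
   positive minimum on [0, z1] would bound Phi(z1) = 0 from below; if Psi were nonnegative,
   so would be Phi.  The Beta law is reached without integration, as the limit of the
   fraction of red draws in a Polya urn, whose falling-factorial moments are explicit. *)

Lemma poch_pos al k : 0 < al -> 0 < poch al k.
Proof.
  intros al_pos; induction k as [|k IH]; simpl; [lra|].
  pose proof (pos_INR k); apply Rmult_lt_0_compat; lra.
Qed.

Lemma poch_le_shift al be k : 0 < al -> 0 <= be -> poch al k <= poch (al + be) k.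
Proof.
  intros al_pos be_nonneg; induction k as [|k IH]; simpl; [lra|].
  pose proof (pos_INR k); pose proof (poch_pos al k al_pos).
  apply Rmult_le_compat; lra.
Qed.

Lemma pow_unit x k : 0 <= x <= 1 -> 0 <= x ^ k <= 1.
Proof.
  intros x_unit; split; [apply pow_le; lra|].
  rewrite <- (pow1 k); apply pow_incr; lra.
Qed.

Definition beta_moment (al be : R) (k : nat) : R := poch al k / poch (al + be) k.

Lemma beta_moment_unit al be k : 0 < al -> 0 <= be -> 0 <= beta_moment al be k <= 1.
Proof.
  intros al_pos be_nonneg; unfold beta_moment.
  pose proof (poch_pos al k al_pos); pose proof (poch_le_shift al be k al_pos be_nonneg).
  split.
  - apply Rdiv_le_0_compat; lra.
  - apply Rle_div_l; lra.
Qed.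

Fixpoint falling (x : R) (k : nat) : R :=
  match k with
  | O => 1
  | S k' => falling x k' * (x - INR k')
  end.

Lemma falling_shift x k : falling (x + 1) (S k) = (x + 1) * falling x k.
Proof.
  induction k as [|k IH]; [simpl; ring|].
  change (falling (x + 1) (S (S k))) with (falling (x + 1) (S k) * (x + 1 - INR (S k))).
  rewrite IH, S_INR; simpl; ring.
Qed.

Lemma falling_nat_lt j k : (j < k)%nat -> falling (INR j) k = 0.
Proof.
  induction k as [|k IH]; intros j_lt; [lia|simpl].
  destruct (Nat.eq_dec j k) as [->|j_ne]; [ring|].
  rewrite IH by lia; ring.
Qed.

Lemma falling_nat_pos n k : (k <= n)%nat -> 0 < falling (INR n) k.
Proof.
  induction k as [|k IH]; intros k_le; simpl; [lra|].
  pose proof (lt_INR k n ltac:(lia)).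
  apply Rmult_lt_0_compat; [apply IH; lia | lra].
Qed.

Lemma falling_ratio_succ j n k : (k < n)%nat ->
  falling (INR j) (S k) / falling (INR n) (S k)
  = falling (INR j) k / falling (INR n) k * ((INR j - INR k) / (INR n - INR k)).
Proof.
  intros k_lt; simpl.
  pose proof (falling_nat_pos n k ltac:(lia)); pose proof (lt_INR k n k_lt).
  field; lra.
Qed.

Lemma falling_ratio_unit j n k : (k <= j)%nat -> (j <= n)%nat ->
  0 <= falling (INR j) k / falling (INR n) k <= 1.
Proof.
  intros k_le j_le; induction k as [|k IH]; [simpl; lra|].
  rewrite falling_ratio_succ by lia.
  pose proof (IH ltac:(lia)); pose proof (lt_INR k j ltac:(lia)); pose proof (le_INR j n j_le).
  assert (0 <= (INR j - INR k) / (INR n - INR k) <= 1)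
    by (split; [apply Rdiv_le_0_compat | apply Rle_div_l]; lra).
  nra.
Qed.

Lemma falling_ratio_power_gap_le j n k : (1 <= n)%nat -> (k <= j)%nat -> (j <= n)%nat ->
  Rabs ((INR j / INR n) ^ k - falling (INR j) k / falling (INR n) k) <= INR k ^ 2 / INR n.
Proof.
  intros n_pos k_le j_le; induction k as [|k IH].
  - replace ((INR j / INR n) ^ 0 - falling (INR j) 0 / falling (INR n) 0) with 0 by (simpl; field).
    rewrite Rabs_R0; simpl; unfold Rdiv; lra.
  - pose proof (lt_0_INR n ltac:(lia)); pose proof (le_INR j n j_le); pose proof (lt_INR k j k_le).
    pose proof (pos_INR k).
    pose proof (falling_ratio_unit j n k ltac:(lia) j_le) as q_unit.
    specialize (IH ltac:(lia)).
    rewrite falling_ratio_succ, S_INR by lia.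
    set (N := INR n) in *; set (J := INR j) in *; set (K := INR k) in *.
    set (t := J / N) in *; set (q := falling J k / falling N k) in *.
    assert (t_unit : 0 <= t <= 1) by (split; [apply Rdiv_le_0_compat | apply Rle_div_l]; lra).
    pose proof (pow_unit t k t_unit).
    set (s := (N - J) / (N - K)).
    assert (s_unit : 0 <= s <= 1) by (split; [apply Rdiv_le_0_compat | apply Rle_div_l]; lra).
    assert (0 <= K / N) by (apply Rdiv_le_0_compat; lra).
    replace (t ^ S k - q * ((J - K) / (N - K))) with (t * (t ^ k - q) + q * (K / N * s))
      by (unfold t, s; simpl; field; lra).
    assert (room : K ^ 2 / N + K / N <= (K + 1) ^ 2 / N).
    { replace ((K + 1) ^ 2 / N) with (K ^ 2 / N + K / N + (K + 1) / N) by (field; lra).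
      assert (0 <= (K + 1) / N) by (apply Rdiv_le_0_compat; lra); lra. }
    set (w := K / N * s).
    assert (0 <= w <= K / N) by (unfold w; nra).
    eapply Rle_trans; [apply Rabs_triang|].
    rewrite !Rabs_mult, (Rabs_pos_eq t), (Rabs_pos_eq q), (Rabs_pos_eq w) by lra.
    pose proof (Rabs_pos (t ^ k - q)).
    nra.
Qed.

Lemma falling_ratio_power_gap j n k : (1 <= n)%nat -> (j <= n)%nat ->
  Rabs ((INR j / INR n) ^ k - falling (INR j) k / falling (INR n) k) <= INR k ^ 2 / INR n.
Proof.
  intros n_pos j_le.
  destruct (Nat.le_gt_cases k j) as [k_le | j_lt]; [apply falling_ratio_power_gap_le; assumption|].
  rewrite (falling_nat_lt j k j_lt), Rdiv_0_l, Rminus_0_r.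
  pose proof (lt_0_INR n ltac:(lia)); pose proof (le_INR j n j_le); pose proof (lt_INR j k j_lt).
  pose proof (pos_INR j); pose proof (le_INR 1 k ltac:(lia)) as K_ge1; simpl in K_ge1.
  assert (t_unit : 0 <= INR j / INR n <= 1) by (split; [apply Rdiv_le_0_compat | apply Rle_div_l]; lra).
  assert (INR j / INR n <= INR k ^ 2 / INR n)
    by (apply Rmult_le_compat_r; [left; apply Rinv_0_lt_compat|]; nra).
  destruct k as [|k]; [lia|].
  pose proof (pow_unit _ k t_unit).
  rewrite Rabs_pos_eq by (apply pow_le; lra).
  simpl pow at 1; nra.
Qed.

Lemma le_of_le_plus_div_nat x y K : (forall n, (1 <= n)%nat -> x <= y + K / INR n) -> x <= y.
Proof.
  intros close; apply Rle_plus_epsilon; intros eps eps_pos.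
  pose proof (Rle_abs K); pose proof (Rabs_pos K).
  destruct (archimed_cor1 (eps / (Rabs K + 1))) as [n [n_small n_pos]];
    [apply Rdiv_lt_0_compat; lra|].
  specialize (close n n_pos).
  pose proof (lt_0_INR n n_pos).
  apply Rlt_div_r in n_small; [|lra].
  assert (K / INR n <= (Rabs K + 1) * / INR n)
    by (apply Rmult_le_compat_r; [left; apply Rinv_0_lt_compat|]; lra).
  lra.
Qed.

Definition entire (q : nat -> R) : Prop := forall x, CV_disk q x.

Lemma entire_is_series q x : entire q -> is_series (fun k => q k * x ^ k) (PSeries q x).
Proof. intros q_entire; apply (Series_correct (fun k => q k * x ^ k)), ex_series_Rabs, q_entire. Qed.

Lemma entire_ex_series_sq_weight q u : entire q ->
  ex_series (fun k => Rabs (q k * u ^ k) * INR k ^ 2).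
Proof.
  intros q_entire.
  apply (@ex_series_le R_AbsRing R_CompleteNormedModule _ (fun k => Rabs (q k * (4 * u) ^ k)));
    [|apply q_entire].
  intros k; change norm with Rabs; cbv beta.
  pose proof (Rle_pow_lin 1 k ltac:(lra)) as lin; replace (1 + 1) with 2 in lin by ring.
  pose proof (pos_INR k); pose proof (Rabs_pos (q k * u ^ k)).
  rewrite Rabs_pos_eq by nra.
  replace (q k * (4 * u) ^ k) with (q k * u ^ k * 4 ^ k) by (rewrite Rpow_mult_distr; ring).
  rewrite (Rabs_mult (q k * u ^ k)), (Rabs_pos_eq (4 ^ k)) by (apply pow_le; lra).
  apply Rmult_le_compat_l; [lra|].
  replace (4 ^ k) with (2 ^ k * 2 ^ k) by (rewrite <- Rpow_mult_distr; f_equal; ring).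
  nra.
Qed.

Section PolyaUrn.

Variables al be : R.

(* [polya_mean n h] is the expectation of [h J_n], where [J_n] counts the red draws among the
   first [n] draws of a Polya urn started with red weight [al] and black weight [be]: given
   [J_n = j], the next draw is red with probability [(al + j) / (al + be + n)]. *)
Fixpoint polya_mean (n : nat) (h : nat -> R) : R :=
  match n with
  | O => h O
  | S n' => polya_mean n' (fun j =>
      ((be + INR n' - INR j) * h j + (al + INR j) * h (S j)) / (al + be + INR n'))
  end.

Lemma polya_mean_ext n h1 h2 : (forall j, h1 j = h2 j) -> polya_mean n h1 = polya_mean n h2.
Proof.
  revert h1 h2; induction n as [|n IH]; intros h1 h2 E; simpl; [apply E|].
  apply IH; intros j; rewrite !E; reflexivity.
Qed.

Hypothesis al_pos : 0 < al.
Hypothesis be_nonneg : 0 <= be.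

Lemma polya_denom_pos n : 0 < al + be + INR n.
Proof. pose proof (pos_INR n); lra. Qed.

Lemma polya_mean_linear n c1 c2 h1 h2 :
  polya_mean n (fun j => c1 * h1 j + c2 * h2 j) = c1 * polya_mean n h1 + c2 * polya_mean n h2.
Proof.
  revert h1 h2; induction n as [|n IH]; intros h1 h2; simpl; [reflexivity|].
  rewrite <- IH; apply polya_mean_ext; intros j.
  pose proof (polya_denom_pos n); field; lra.
Qed.

Lemma polya_mean_scal n c h : polya_mean n (fun j => c * h j) = c * polya_mean n h.
Proof.
  rewrite (polya_mean_ext n _ (fun j => c * h j + 0 * h j)) by (intros; ring).
  rewrite polya_mean_linear; ring.
Qed.

Lemma polya_mean_minus n h1 h2 :
  polya_mean n (fun j => h1 j - h2 j) = polya_mean n h1 - polya_mean n h2.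
Proof.
  rewrite (polya_mean_ext n _ (fun j => 1 * h1 j + (-1) * h2 j)) by (intros; ring).
  rewrite polya_mean_linear; ring.
Qed.

Lemma polya_mean_const n c : polya_mean n (fun _ => c) = c.
Proof.
  revert c; induction n as [|n IH]; intros c; simpl; [reflexivity|].
  transitivity (polya_mean n (fun _ => c)); [|apply IH].
  apply polya_mean_ext; intros j.
  pose proof (polya_denom_pos n); field; lra.
Qed.

Lemma polya_mean_le n h1 h2 : (forall j, (j <= n)%nat -> h1 j <= h2 j) ->
  polya_mean n h1 <= polya_mean n h2.
Proof.
  revert h1 h2; induction n as [|n IH]; intros h1 h2 le12; simpl; [apply le12; lia|].
  apply IH; intros j j_le.
  pose proof (polya_denom_pos n); pose proof (le_INR j n j_le); pose proof (pos_INR j).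
  pose proof (le12 j ltac:(lia)); pose proof (le12 (S j) ltac:(lia)).
  apply Rmult_le_compat_r; [left; apply Rinv_0_lt_compat; lra | nra].
Qed.

Lemma polya_mean_abs_le n h B : (forall j, (j <= n)%nat -> Rabs (h j) <= B) ->
  Rabs (polya_mean n h) <= B.
Proof.
  intros bound; apply Rabs_le; split.
  - rewrite <- (polya_mean_const n (- B)) at 1.
    apply polya_mean_le; intros j j_le; specialize (bound j j_le).
    apply Rabs_le_between in bound; lra.
  - rewrite <- (polya_mean_const n B).
    apply polya_mean_le; intros j j_le; specialize (bound j j_le).
    apply Rabs_le_between in bound; lra.
Qed.

Lemma polya_mean_series n (f : nat -> nat -> R) (s : nat -> R) :
  (forall j, is_series (f j) (s j)) -> is_series (fun k => polya_mean n (fun j => f j k)) (polya_mean n s).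
Proof.
  revert f s; induction n as [|n IH]; intros f s sums; simpl; [apply sums|].
  apply (IH (fun j k => ((be + INR n - INR j) * f j k + (al + INR j) * f (S j) k) / (al + be + INR n))).
  intros j; apply is_series_scal_r, (is_series_plus (V := R_NormedModule));
    apply (is_series_scal_l (V := R_NormedModule)); apply sums.
Qed.

Lemma polya_mean_falling n k :
  polya_mean n (fun j => falling (INR j) k) = falling (INR n) k * beta_moment al be k.
Proof.
  unfold beta_moment; revert k; induction n as [|n IH]; intros k; cbn [polya_mean].
  - destruct k as [|k]; [simpl; field|].
    rewrite (falling_nat_lt 0 (S k)) by lia; ring.
  - pose proof (polya_denom_pos n) as D.
    destruct k as [|k].
    + rewrite (polya_mean_ext n _ (fun j => falling (INR j) 0)), IH by (intros j; simpl; field; lra).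
      simpl; field; lra.
    + rewrite (polya_mean_ext n _ (fun j =>
          ((al + be + INR n + INR (S k)) / (al + be + INR n)) * falling (INR j) (S k)
          + (INR (S k) * (al + INR k) / (al + be + INR n)) * falling (INR j) k)).
      2: { intros j; rewrite !S_INR, falling_shift.
           change (falling (INR j) (S k)) with (falling (INR j) k * (INR j - INR k)).
           field; lra. }
      rewrite polya_mean_linear, !IH.
      replace (INR (S n)) with (INR n + 1) by (rewrite S_INR; ring).
      rewrite falling_shift.
      change (falling (INR n) (S k)) with (falling (INR n) k * (INR n - INR k)).
      change (poch al (S k)) with (poch al k * (al + INR k)).
      change (poch (al + be) (S k)) with (poch (al + be) k * (al + be + INR k)).
      pose proof (polya_denom_pos k); pose proof (poch_pos (al + be) k ltac:(lra)).
      rewrite S_INR; field; lra.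
Qed.

Lemma polya_mean_power_gap n k : (1 <= n)%nat ->
  Rabs (polya_mean n (fun j => (INR j / INR n) ^ k) - beta_moment al be k) <= INR k ^ 2 / INR n.
Proof.
  intros n_pos; pose proof (le_INR 1 n n_pos) as N_ge1; simpl in N_ge1.
  destruct (Nat.le_gt_cases k n) as [k_le | k_gt].
  - assert (moment : beta_moment al be k = polya_mean n (fun j => falling (INR j) k / falling (INR n) k)).
    { pose proof (falling_nat_pos n k k_le).
      rewrite (polya_mean_ext n _ (fun j => / falling (INR n) k * falling (INR j) k))
        by (intros; unfold Rdiv; ring).
      rewrite polya_mean_scal, polya_mean_falling; field; lra. }
    rewrite moment, <- polya_mean_minus.
    apply polya_mean_abs_le; intros j j_le; apply falling_ratio_power_gap; assumption.
  - rewrite <- (polya_mean_const n (beta_moment al be k)); rewrite <- polya_mean_minus.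
    apply polya_mean_abs_le; intros j j_le.
    pose proof (le_INR j n j_le); pose proof (pos_INR j).
    assert (t_unit : 0 <= INR j / INR n <= 1)
      by (split; [apply Rdiv_le_0_compat | apply Rle_div_l]; lra).
    pose proof (pow_unit _ k t_unit); pose proof (beta_moment_unit al be k al_pos be_nonneg).
    pose proof (lt_INR n k k_gt).
    assert (1 <= INR k ^ 2 / INR n) by (apply Rle_div_r; nra).
    apply Rabs_le; lra.
Qed.

Lemma entire_beta_transform q : entire q -> entire (fun k => beta_moment al be k * q k).
Proof.
  intros q_entire x.
  apply (@ex_series_le R_AbsRing R_CompleteNormedModule _ (fun k => Rabs (q k * x ^ k)));
    [|apply q_entire].
  intros k; change norm with Rabs; simpl.
  pose proof (beta_moment_unit al be k al_pos be_nonneg).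
  rewrite Rabs_Rabsolu, Rmult_assoc, Rabs_mult, (Rabs_pos_eq (beta_moment al be k)) by lra.
  pose proof (Rabs_pos (q k * x ^ k)); nra.
Qed.

Lemma polya_mean_PSeries_gap q u n : entire q -> (1 <= n)%nat ->
  Rabs (polya_mean n (fun j => PSeries q (INR j / INR n * u))
        - PSeries (fun k => beta_moment al be k * q k) u)
  <= Series (fun k => Rabs (q k * u ^ k) * INR k ^ 2) / INR n.
Proof.
  intros q_entire n_pos.
  set (S := polya_mean n (fun j => PSeries q (INR j / INR n * u))).
  set (P := PSeries (fun k => beta_moment al be k * q k) u).
  set (w := fun k => Rabs (q k * u ^ k) * INR k ^ 2).
  assert (HS : is_series (fun k => q k * u ^ k * polya_mean n (fun j => (INR j / INR n) ^ k)) S).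
  { eapply is_series_ext; [|apply polya_mean_series; intros j; apply entire_is_series, q_entire].
    intros k; rewrite <- polya_mean_scal; apply polya_mean_ext; intros j.
    rewrite Rpow_mult_distr; ring. }
  assert (HP : is_series (fun k => beta_moment al be k * q k * u ^ k) P)
    by (apply entire_is_series, entire_beta_transform, q_entire).
  set (d := fun k => q k * u ^ k * (polya_mean n (fun j => (INR j / INR n) ^ k) - beta_moment al be k)).
  assert (Hd : is_series d (S - P)).
  { eapply is_series_ext; [|exact (is_series_minus _ _ _ _ HS HP)].
    intros k; unfold d; cbv [plus opp]; simpl; ring. }
  assert (d_bound : forall k, Rabs (d k) <= w k / INR n).
  { intros k; unfold d, w, Rdiv; rewrite Rabs_mult, Rmult_assoc.
    apply Rmult_le_compat_l; [apply Rabs_pos | apply polya_mean_power_gap, n_pos]. }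
  assert (w_sum : ex_series (fun k => w k / INR n))
    by (apply ex_series_scal_r, entire_ex_series_sq_weight, q_entire).
  rewrite <- (is_series_unique _ _ Hd).
  eapply Rle_trans.
  - apply Series_Rabs.
    apply (@ex_series_le R_AbsRing R_CompleteNormedModule _ (fun k => w k / INR n)); [|exact w_sum].
    intros k; change norm with Rabs; simpl; rewrite Rabs_Rabsolu; apply d_bound.
  - unfold Rdiv; rewrite <- Series_scal_r.
    apply Series_le; [intros k; split; [apply Rabs_pos | apply d_bound] | exact w_sum].
Qed.

Lemma beta_transform_lower_bound q u m : entire q ->
  (forall t, 0 <= t <= 1 -> m <= PSeries q (t * u)) ->
  m <= PSeries (fun k => beta_moment al be k * q k) u.
Proof.
  intros q_entire bound.
  apply (le_of_le_plus_div_nat _ _ (Series (fun k => Rabs (q k * u ^ k) * INR k ^ 2))).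
  intros n n_pos.
  pose proof (polya_mean_PSeries_gap q u n q_entire n_pos) as gap.
  assert (m <= polya_mean n (fun j => PSeries q (INR j / INR n * u))).
  { rewrite <- (polya_mean_const n m); apply polya_mean_le; intros j j_le.
    pose proof (le_INR j n j_le); pose proof (pos_INR j); pose proof (lt_0_INR n n_pos).
    apply bound; split; [apply Rdiv_le_0_compat | apply Rle_div_l]; lra. }
  apply Rabs_le_between in gap; lra.
Qed.

Lemma beta_transform_segment_bound q p u m : entire q ->
  (forall k, p k = beta_moment al be k * q k) ->
  (forall t, 0 <= t <= 1 -> m <= PSeries q (t * u)) ->
  forall t, 0 <= t <= 1 -> m <= PSeries p (t * u).
Proof.
  intros q_entire p_def bound t t_unit.
  rewrite (PSeries_ext _ _ _ p_def); apply beta_transform_lower_bound; [exact q_entire|].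
  intros s s_unit; rewrite <- Rmult_assoc; apply bound; split; nra.
Qed.

End PolyaUrn.

Definition F12_coef (a b c : R) (k : nat) : R :=
  poch a k / (INR (Factorial.fact k) * poch b k * poch c k).

Lemma F12_PSeries a b c x : F12 a b c x = PSeries (F12_coef a b c) (- x ^ 2 / 4).
Proof. reflexivity. Qed.

Lemma F12_coef_pos a b c k : 0 < a -> 0 < b -> 0 < c -> 0 < F12_coef a b c k.
Proof.
  intros ha hb hc; unfold F12_coef.
  pose proof (INR_fact_lt_0 k); pose proof (poch_pos a k ha);
    pose proof (poch_pos b k hb); pose proof (poch_pos c k hc).
  apply Rdiv_lt_0_compat; [assumption | apply Rmult_lt_0_compat; [apply Rmult_lt_0_compat|]; assumption].
Qed.

Lemma F12_coef_ratio a b c k : 0 < a -> 0 < b -> 0 < c ->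
  F12_coef a b c (S k) / F12_coef a b c k = (a + INR k) / (INR (S k) * (b + INR k) * (c + INR k)).
Proof.
  intros ha hb hc; unfold F12_coef; simpl poch; rewrite fact_simpl, mult_INR.
  pose proof (INR_fact_lt_0 k); pose proof (poch_pos a k ha);
    pose proof (poch_pos b k hb); pose proof (poch_pos c k hc); pose proof (pos_INR k).
  rewrite S_INR; field; repeat split; lra.
Qed.

Lemma F12_coef_CV_radius a b c : 0 < a -> 0 < b -> 0 < c -> CV_radius (F12_coef a b c) = p_infty.
Proof.
  intros ha hb hc; apply CV_radius_infinite_DAlembert.
  { intros k; apply Rgt_not_eq, F12_coef_pos; assumption. }
  set (M := (1 + a / b) / c).
  apply (is_lim_seq_le_le (fun _ => 0) _ (fun k => M * / INR (S k))).
  - intros k; rewrite F12_coef_ratio by assumption.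
    pose proof (pos_INR k); pose proof (lt_0_INR (S k) ltac:(lia)); rewrite S_INR in *.
    assert (0 <= a / b * INR k) by (apply Rmult_le_pos; [apply Rdiv_le_0_compat|]; lra).
    assert (den_pos : 0 < (INR k + 1) * (b + INR k) * (c + INR k))
      by (apply Rmult_lt_0_compat; [nra | lra]).
    rewrite Rabs_pos_eq by (apply Rdiv_le_0_compat; lra).
    split; [apply Rdiv_le_0_compat; lra|].
    apply Rle_div_l; [exact den_pos|].
    unfold M; replace ((1 + a / b) / c * / (INR k + 1) * ((INR k + 1) * (b + INR k) * (c + INR k)))
      with ((b + INR k + a + a / b * INR k) * (1 + INR k / c)) by (field; lra).
    assert (0 <= INR k / c) by (apply Rdiv_le_0_compat; lra).
    nra.
  - apply is_lim_seq_const.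
  - replace (Finite 0) with (Rbar_mult M (Rbar_inv p_infty)) by (simpl; f_equal; ring).
    apply is_lim_seq_scal_l, is_lim_seq_inv; [|discriminate].
    apply (is_lim_seq_incr_1 INR), is_lim_seq_INR.
Qed.

Lemma F12_coef_entire a b c : 0 < a -> 0 < b -> 0 < c -> entire (F12_coef a b c).
Proof. intros ha hb hc x; apply CV_disk_inside; rewrite F12_coef_CV_radius by assumption; exact I. Qed.

Lemma F12_continuous a b c : 0 < a -> 0 < b -> 0 < c -> continuity (fun x => F12 a b c x).
Proof.
  intros ha hb hc x.
  apply (continuity_pt_comp (fun x => - x ^ 2 / 4) (PSeries (F12_coef a b c))); [reg|].
  apply PSeries_continuity; rewrite F12_coef_CV_radius by assumption; exact I.
Qed.

Lemma F12_at_0 a b c : F12 a b c 0 = 1.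
Proof.
  rewrite F12_PSeries; replace (- 0 ^ 2 / 4) with 0 by (simpl; field).
  rewrite PSeries_0; unfold F12_coef; simpl; field.
Qed.

Lemma F12_coef_shift_num a a' b c k : 0 < a <= a' -> 0 < b -> 0 < c ->
  F12_coef a b c k = beta_moment a (a' - a) k * F12_coef a' b c k.
Proof.
  intros ha hb hc; unfold F12_coef, beta_moment; replace (a + (a' - a)) with a' by ring.
  pose proof (INR_fact_lt_0 k); pose proof (poch_pos a' k ltac:(lra));
    pose proof (poch_pos b k hb); pose proof (poch_pos c k hc).
  field; repeat split; lra.
Qed.

Lemma F12_coef_shift_den a b b' c k : 0 < b' <= b -> 0 < c ->
  F12_coef a b c k = beta_moment b' (b - b') k * F12_coef a b' c k.
Proof.
  intros hb hc; unfold F12_coef, beta_moment; replace (b' + (b - b')) with b by ring.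
  pose proof (INR_fact_lt_0 k); pose proof (poch_pos b k ltac:(lra));
    pose proof (poch_pos b' k ltac:(lra)); pose proof (poch_pos c k hc).
  field; repeat split; lra.
Qed.

Lemma F12_coef_sym a b c k : F12_coef a b c k = F12_coef a c b k.
Proof. unfold F12_coef; f_equal; ring. Qed.

Lemma F12_segment_bound a b c X m : 0 <= X ->
  (forall x, 0 <= x <= X -> m <= F12 a b c x) ->
  forall t, 0 <= t <= 1 -> m <= PSeries (F12_coef a b c) (t * (- X ^ 2 / 4)).
Proof.
  intros hX bound t t_unit.
  replace (t * (- X ^ 2 / 4)) with (- (X * sqrt t) ^ 2 / 4)
    by (rewrite Rpow_mult_distr, pow2_sqrt by lra; field).
  rewrite <- F12_PSeries; apply bound.
  pose proof (sqrt_pos t); pose proof (sqrt_le_1_alt t 1 ltac:(lra)); rewrite sqrt_1 in *.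
  split; nra.
Qed.

Lemma F12_lower_bound_transfer a b c a' b' c' X m :
  0 < a <= a' -> 0 < b' <= b -> 0 < c' <= c -> 0 <= X ->
  (forall x, 0 <= x <= X -> m <= F12 a' b' c' x) -> m <= F12 a b c X.
Proof.
  intros ha hb hc hX bound.
  pose proof (F12_segment_bound a' b' c' X m hX bound) as bound_a'b'c'.
  set (U := - X ^ 2 / 4) in *.
  assert (bound_a'bc' : forall t, 0 <= t <= 1 -> m <= PSeries (F12_coef a' b c') (t * U)).
  { apply (beta_transform_segment_bound b' (b - b') ltac:(lra) ltac:(lra) (F12_coef a' b' c'));
      [apply F12_coef_entire; lra | intros k; apply F12_coef_shift_den; lra | exact bound_a'b'c']. }
  assert (bound_a'bc : forall t, 0 <= t <= 1 -> m <= PSeries (F12_coef a' b c) (t * U)).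
  { apply (beta_transform_segment_bound c' (c - c') ltac:(lra) ltac:(lra) (F12_coef a' b c'));
      [apply F12_coef_entire; lra | | exact bound_a'bc'].
    intros k; rewrite F12_coef_sym, (F12_coef_sym a' b c'); apply F12_coef_shift_den; lra. }
  assert (bound_abc : forall t, 0 <= t <= 1 -> m <= PSeries (F12_coef a b c) (t * U)).
  { apply (beta_transform_segment_bound a (a' - a) ltac:(lra) ltac:(lra) (F12_coef a' b c));
      [apply F12_coef_entire; lra | intros k; apply F12_coef_shift_num; lra | exact bound_a'bc]. }
  rewrite F12_PSeries; fold U; rewrite <- (Rmult_1_l U); apply bound_abc; lra.
Qed.

Lemma pos_on_segment_of_no_zero f X : continuity f -> 0 < f 0 ->
  (forall z, 0 < z <= X -> f z <> 0) -> forall x, 0 <= x <= X -> 0 < f x.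
Proof.
  intros f_cont f0_pos no_zero x Hx.
  destruct (Rlt_or_le 0 (f x)) as [pos | nonpos]; [exact pos | exfalso].
  destruct (IVT_cor f 0 x f_cont ltac:(lra) ltac:(nra)) as [z [Hz fz]].
  destruct (Req_dec z 0) as [-> | z_ne]; [lra|].
  apply (no_zero z); [lra | exact fz].
Qed.

Lemma pos_near_zero f : continuity f -> 0 < f 0 -> exists x, 0 < x /\ 0 < f x.
Proof.
  intros f_cont f0_pos.
  destruct (continuous_neq_0 f 0 (f_cont 0) ltac:(lra)) as [eps no_zero].
  pose proof (cond_pos eps).
  exists (eps / 2); split; [lra|].
  apply (pos_on_segment_of_no_zero f (eps / 2)); [assumption | assumption | | lra].
  intros z Hz; rewrite <- (Rplus_0_l z); apply no_zero; rewrite Rabs_pos_eq; lra.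
Qed.

Lemma pos_on_segment_min f X : continuity f -> 0 <= X ->
  (forall x, 0 <= x <= X -> 0 < f x) -> exists m, 0 < m /\ forall x, 0 <= x <= X -> m <= f x.
Proof.
  intros f_cont hX pos.
  destruct (continuity_ab_min f 0 X hX (fun x _ => f_cont x)) as [x_min [min_le x_min_in]].
  exists (f x_min); split; [apply pos, x_min_in | exact min_le].
Qed.

Theorem lemma2 (a b c z1 gamma delta epsilon : R)
  (ha : 0 < a) (hb : 0 < b) (hc : 0 < c)
  (halt : alternates_in_sign (fun x => F12 a b c x))
  (hz1pos : 0 < z1) (hz1 : F12 a b c z1 = 0)
  (hz1first : forall x, 0 < x < z1 -> F12 a b c x <> 0)
  (hgamma : 0 <= gamma) (hdelta : 0 <= delta < b) (heps : 0 <= epsilon < c) :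
  alternates_in_sign (fun x => F12 (a + gamma) (b - delta) (c - epsilon) x) /\
  exists z, 0 < z <= z1 /\ F12 (a + gamma) (b - delta) (c - epsilon) z = 0.
Proof.
  set (Psi := fun x => F12 (a + gamma) (b - delta) (c - epsilon) x).
  assert (Psi_cont : continuity Psi) by (apply F12_continuous; lra).
  assert (Psi0 : 0 < Psi 0) by (unfold Psi; rewrite F12_at_0; lra).
  assert (transfer : forall X m, 0 <= X -> (forall x, 0 <= x <= X -> m <= Psi x) -> m <= F12 a b c X)
    by (intros X m; apply F12_lower_bound_transfer; lra).
  assert (zero : exists z, 0 < z <= z1 /\ Psi z = 0).
  { apply NNPP; intros no_zero.
    destruct (pos_on_segment_min Psi z1 Psi_cont) as [m [m_pos m_le]]; [lra| |].
    - apply pos_on_segment_of_no_zero; [exact Psi_cont | exact Psi0 |].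
      intros z Hz Psi_z; apply no_zero; exists z; split; assumption.
    - pose proof (transfer z1 m ltac:(lra) m_le); lra. }
  split; [split | exact zero].
  - apply pos_near_zero; assumption.
  - apply NNPP; intros no_neg.
    destruct halt as [_ [y [y_pos Phi_y]]].
    assert (0 <= F12 a b c y).
    { apply transfer; [lra|]; intros x Hx; apply Rnot_lt_le; intros Psi_neg.
      destruct (Req_dec x 0) as [-> | x_ne]; [lra|].
      apply no_neg; exists x; split; [lra | exact Psi_neg]. }
    cbv beta in Phi_y; lra.
Qed.
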